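(* In the 3-body problem in ${\bf S}^2$ with masses $m_1,m_2,m_3>0$, fix $z\in(-1,1)$ and $r=(1-z^2)^{1/2}$. There exists $\omega\neq 0$ such that ${\bf q}_i(t)=(r\cos(\omega t+\alpha_i), r\sin(\omega t+\alpha_i), z)$ with $\alpha_1=0,\alpha_2=2\pi/3,\alpha_3=4\pi/3$ is a solution of the equations of motion (i.e. the equilateral triangle in the plane $z=$ constant, given suitable initial velocities, rotates in its own plane as an elliptic relative equilibrium) if and only if $m_1=m_2=m_3$.
   Context: The $n$-body problem in ${\bf S}^2$: bodies of masses $m_1,\dots,m_n>0$ have positions ${\bf q}_i=(x_i,y_i,z_i)\in\mathbb R^3$ on the unit sphere ${\bf S}^2=\{{\bf q}:{\bf q}\cdot{\bf q}=1\}$ ($\cdot$ the Euclidean inner product), and satisfy $$\ddot{\bf q}_i=\sum_{j\ne i}\frac{m_j[{\bf q}_j-({\bf q}_i\cdot{\bf q}_j){\bf q}_i]}{[1-({\bf q}_i\cdot{\bf q}_j)^2]^{3/2}}-(\dot{\bf q}_i\cdot\dot{\bf q}_i){\bf q}_i,\qquad {\bf q}_i\cdot{\bf q}_i=1,\ \ {\bf q}_i\cdot\dot{\bf q}_i=0,$$ $i=1,\dots,n$, defined only for configurations with $({\bf q}_i\cdot{\bf q}_j)^2\ne 1$ for all $i\ne j$. *)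

From Stdlib Require Import Reals.
Open Scope R_scope.

Record V3 := mkV3 { vx : R; vy : R; vz : R }.

Definition vadd (a b : V3) : V3 := mkV3 (vx a + vx b) (vy a + vy b) (vz a + vz b).
Definition vsub (a b : V3) : V3 := mkV3 (vx a - vx b) (vy a - vy b) (vz a - vz b).
Definition vscale (c : R) (a : V3) : V3 := mkV3 (c * vx a) (c * vy a) (c * vz a).
Definition vdot (a b : V3) : R := vx a * vx b + vy a * vy b + vz a * vz b.
Definition vzero : V3 := mkV3 0 0 0.

Fixpoint vsum (n : nat) (f : nat -> V3) : V3 :=
  match n with
  | O => vzero
  | S k => vadd (vsum k f) (f k)
  end.

Definition has_deriv3 (p : R -> V3) (t : R) (d : V3) : Prop :=
  derivable_pt_lim (fun s => vx (p s)) t (vx d) /\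
  derivable_pt_lim (fun s => vy (p s)) t (vy d) /\
  derivable_pt_lim (fun s => vz (p s)) t (vz d).

Definition force (n : nat) (m : nat -> R) (q : nat -> V3) (i : nat) : V3 :=
  vsum n (fun j =>
    if Nat.eqb j i then vzero
    else vscale (m j / (sqrt (1 - (vdot (q i) (q j))^2))^3)
                (vsub (q j) (vscale (vdot (q i) (q j)) (q i)))).

Definition is_solution (n : nat) (m : nat -> R) (q : nat -> R -> V3) : Prop :=
  exists v a : nat -> R -> V3,
    forall (i : nat) (t : R), (i < n)%nat ->
      has_deriv3 (q i) t (v i t) /\
      has_deriv3 (v i) t (a i t) /\
      vdot (q i t) (q i t) = 1 /\
      vdot (q i t) (v i t) = 0 /\
      (forall j : nat, (j < n)%nat -> j <> i -> (vdot (q i t) (q j t))^2 <> 1) /\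
      a i t = vsub (force n m (fun j => q j t) i)
                   (vscale (vdot (v i t) (v i t)) (q i t)).

(* alpha_i for bodies 0,1,2 (i.e. bodies 1,2,3 of the paper): 0, 2pi/3, 4pi/3 *)
Definition alpha (i : nat) : R := 2 * PI * INR i / 3.

Definition rot_triangle (z w : R) (i : nat) (t : R) : V3 :=
  mkV3 (sqrt (1 - z^2) * cos (w * t + alpha i))
       (sqrt (1 - z^2) * sin (w * t + alpha i)) z.

(* Each body of the configuration [rot_triangle z w] moves uniformly on the
   circle of radius r = sqrt (1 - z^2) at height z, so its velocity and
   acceleration are forced: they are again uniform circular motions, the
   velocity turned a quarter turn ahead and the acceleration pointing to the
   axis.  All mutual inner products equal c = (3 z^2 - 1) / 2, so every
   pairwise attraction has the same denominator D = (1 - c^2)^(3/2).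

   - Necessity: dotting the equation of motion of body i with its velocity
     kills the acceleration and the centripetal term, leaving the tangential
     component of the force, r^2 w (sqrt 3 / 2) (m_(i+1) - m_(i+2)) / D.
     It must vanish, so neighbouring masses agree.
   - Sufficiency: for equal masses mu the force on body i is
     (3 mu / D) (z e_3 - z^2 q_i), which is exactly acceleration plus
     centripetal term once w^2 = 3 mu / D. *)

From Stdlib Require Import Reals Lra Lia Psatz FunctionalExtensionality.
Open Scope R_scope.

Lemma V3_eq (a b : V3) : vx a = vx b -> vy a = vy b -> vz a = vz b -> a = b.
Proof. destruct a, b; cbn; intros -> -> ->; reflexivity. Qed.

Lemma vdot_addl (a b c : V3) : vdot (vadd a b) c = vdot a c + vdot b c.
Proof. unfold vdot, vadd; cbn; ring. Qed.

Lemma vdot_subl (a b c : V3) : vdot (vsub a b) c = vdot a c - vdot b c.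
Proof. unfold vdot, vsub; cbn; ring. Qed.

Lemma vdot_scalel (s : R) (a c : V3) : vdot (vscale s a) c = s * vdot a c.
Proof. unfold vdot, vscale; cbn; ring. Qed.

Lemma has_deriv3_unique (p : R -> V3) (t : R) (d1 d2 : V3) :
  has_deriv3 p t d1 -> has_deriv3 p t d2 -> d1 = d2.
Proof.
  intros [Hx1 [Hy1 Hz1]] [Hx2 [Hy2 Hz2]].
  apply V3_eq; eapply uniqueness_limite; eassumption.
Qed.

Definition circle (k w a h : R) (t : R) : V3 :=
  mkV3 (k * cos (w * t + a)) (k * sin (w * t + a)) h.

Lemma rot_triangle_circle (z w : R) (i : nat) :
  rot_triangle z w i = circle (sqrt (1 - z ^ 2)) w (alpha i) z.
Proof. reflexivity. Qed.

Lemma circle_deriv (k w a h t : R) :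
  has_deriv3 (circle k w a h) t (circle (k * w) w (a + PI / 2) 0 t).
Proof.
  assert (Hphase : derivable_pt_lim (fun s => w * s + a) t w).
  { pose proof (derivable_pt_lim_plus (fun s => w * s) (fun _ => a) t (w * 1) 0
      (derivable_pt_lim_scal id w t 1 (derivable_pt_lim_id t))
      (derivable_pt_lim_const a t)) as H.
    now rewrite Rmult_1_r, Rplus_0_r in H. }
  assert (Hquarter : forall x, cos (x + PI / 2) = - sin x /\ sin (x + PI / 2) = cos x).
  { intro x; rewrite cos_plus, sin_plus, cos_PI2, sin_PI2; split; ring. }
  unfold circle; cbn [vx vy vz].
  replace (w * t + (a + PI / 2)) with (w * t + a + PI / 2) by ring.
  destruct (Hquarter (w * t + a)) as [-> ->].
  repeat split.
  - replace (k * w * - sin (w * t + a)) with (k * (- sin (w * t + a) * w)) by ring.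
    apply derivable_pt_lim_scal.
    apply (derivable_pt_lim_comp (fun s => w * s + a) cos); [exact Hphase | apply derivable_pt_lim_cos].
  - replace (k * w * cos (w * t + a)) with (k * (cos (w * t + a) * w)) by ring.
    apply derivable_pt_lim_scal.
    apply (derivable_pt_lim_comp (fun s => w * s + a) sin); [exact Hphase | apply derivable_pt_lim_sin].
  - apply derivable_pt_lim_const.
Qed.

Lemma circle_half_turn (k w a h t : R) :
  circle k w (a + PI / 2 + PI / 2) h t = circle (- k) w a h t.
Proof.
  unfold circle.
  replace (w * t + (a + PI / 2 + PI / 2)) with (w * t + a + PI) by field.
  rewrite neg_cos, neg_sin; f_equal; ring.
Qed.

Lemma circle_motion_determined (k w a h : R) (v : R -> V3) (t : R) (acc : V3) :
  (forall s, has_deriv3 (circle k w a h) s (v s)) -> has_deriv3 v t acc ->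
  v t = circle (k * w) w (a + PI / 2) 0 t /\ acc = circle (- (k * w * w)) w a 0 t.
Proof.
  intros Hv Hacc.
  assert (Hvel : v = circle (k * w) w (a + PI / 2) 0).
  { apply functional_extensionality; intro s.
    exact (has_deriv3_unique _ _ _ _ (Hv s) (circle_deriv k w a h s)). }
  split; [now rewrite Hvel|].
  rewrite Hvel in Hacc; rewrite <- circle_half_turn.
  exact (has_deriv3_unique _ _ _ _ Hacc (circle_deriv _ _ _ _ t)).
Qed.

Lemma circle_dot (k k' w a b h h' t : R) :
  vdot (circle k w a h t) (circle k' w b h' t) = k * k' * cos (a - b) + h * h'.
Proof.
  unfold vdot, circle; cbn [vx vy vz].
  replace (a - b) with ((w * t + a) - (w * t + b)) by ring.
  rewrite cos_minus; ring.
Qed.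

Lemma circle_dot_tangent (k k' w a b h t : R) :
  vdot (circle k w b h t) (circle k' w (a + PI / 2) 0 t) = k * k' * sin (b - a).
Proof.
  rewrite circle_dot, <- cos_shift.
  replace (PI / 2 - (b - a)) with (- (b - (a + PI / 2))) by ring.
  rewrite cos_neg; ring.
Qed.

Lemma circle_perp (k k' w a h t : R) :
  vdot (circle k w a h t) (circle k' w (a + PI / 2) 0 t) = 0.
Proof. rewrite circle_dot_tangent, Rminus_diag, sin_0; ring. Qed.

Definition next (i : nat) : nat := ((i + 1) mod 3)%nat.
Definition prev (i : nat) : nat := ((i + 2) mod 3)%nat.

Lemma neighbours_spec (i : nat) : (i < 3)%nat ->
  (next i < 3 /\ prev i < 3 /\ next i <> i /\ prev i <> i)%nat.
Proof. intros Hi; destruct i as [|[|[|i]]]; cbn; lia. Qed.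

Lemma other_body (i j : nat) : (i < 3)%nat -> (j < 3)%nat -> j <> i ->
  j = next i \/ j = prev i.
Proof. intros Hi Hj Hji; destruct i as [|[|[|i]]]; cbn; lia. Qed.

Lemma cos_sin_2PI3 : cos (2 * PI / 3) = -1 / 2 /\ sin (2 * PI / 3) = sqrt 3 / 2.
Proof.
  replace (2 * PI / 3) with (2 * (PI / 3)) by field.
  split; [apply cos_2PI3 | apply sin_2PI3].
Qed.

Lemma cos_sin_4PI3 : cos (4 * PI / 3) = -1 / 2 /\ sin (4 * PI / 3) = - (sqrt 3 / 2).
Proof.
  replace (4 * PI / 3) with (PI / 3 + PI) by field.
  rewrite neg_cos, neg_sin, cos_PI3, sin_PI3; split; field.
Qed.

Lemma alpha_gap (i j : nat) (g : R) (k : nat) :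
  alpha j - alpha i + 2 * INR k * PI = g ->
  cos (alpha j - alpha i) = cos g /\ sin (alpha j - alpha i) = sin g.
Proof. intros <-; rewrite cos_period, sin_period; split; reflexivity. Qed.

Lemma alpha_next_gap (i : nat) : (i < 3)%nat ->
  cos (alpha (next i) - alpha i) = -1 / 2 /\ sin (alpha (next i) - alpha i) = sqrt 3 / 2.
Proof.
  intros Hi; rewrite <- (proj1 cos_sin_2PI3), <- (proj2 cos_sin_2PI3).
  apply (alpha_gap _ _ _ (if Nat.eqb i 2 then 1 else 0)).
  unfold alpha; destruct i as [|[|[|i]]]; try lia; cbn; field.
Qed.

Lemma alpha_prev_gap (i : nat) : (i < 3)%nat ->
  cos (alpha (prev i) - alpha i) = -1 / 2 /\ sin (alpha (prev i) - alpha i) = - (sqrt 3 / 2).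
Proof.
  intros Hi; rewrite <- (proj1 cos_sin_4PI3), <- (proj2 cos_sin_4PI3).
  apply (alpha_gap _ _ _ (if Nat.eqb i 0 then 0 else 1)).
  unfold alpha; destruct i as [|[|[|i]]]; try lia; cbn; field.
Qed.

Lemma radius_sq (z : R) : -1 < z < 1 -> sqrt (1 - z ^ 2) * sqrt (1 - z ^ 2) = 1 - z ^ 2.
Proof. intros Hz; apply sqrt_sqrt; nra. Qed.

Lemma radius_pos (z : R) : -1 < z < 1 -> 0 < sqrt (1 - z ^ 2).
Proof. intros Hz; apply sqrt_lt_R0; nra. Qed.

Lemma rot_triangle_unit (z w : R) (i : nat) (t : R) : -1 < z < 1 ->
  vdot (rot_triangle z w i t) (rot_triangle z w i t) = 1.
Proof.
  intros Hz; rewrite rot_triangle_circle, circle_dot, Rminus_diag, cos_0, radius_sq by exact Hz.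
  ring.
Qed.

(* The common cosine of the angles between two bodies, and the resulting
   common denominator of the pairwise attractions. *)
Definition mutual_cos (z : R) : R := (3 * z ^ 2 - 1) / 2.

Definition pair_denominator (z : R) : R := sqrt (1 - mutual_cos z ^ 2) ^ 3.

Lemma mutual_cos_sq_lt_1 (z : R) : -1 < z < 1 -> mutual_cos z ^ 2 < 1.
Proof. intros Hz; unfold mutual_cos; assert (0 <= z ^ 2 < 1) by nra; nra. Qed.

Lemma pair_denominator_pos (z : R) : -1 < z < 1 -> 0 < pair_denominator z.
Proof.
  intros Hz; apply pow_lt, sqrt_lt_R0.
  pose proof (mutual_cos_sq_lt_1 z Hz); lra.
Qed.

Lemma rot_triangle_dot (z w : R) (i j : nat) (t : R) :
  -1 < z < 1 -> (i < 3)%nat -> (j < 3)%nat -> j <> i ->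
  vdot (rot_triangle z w i t) (rot_triangle z w j t) = mutual_cos z.
Proof.
  intros Hz Hi Hj Hji.
  rewrite !rot_triangle_circle, circle_dot, radius_sq by exact Hz.
  replace (alpha i - alpha j) with (- (alpha j - alpha i)) by ring.
  rewrite cos_neg.
  destruct (other_body i j Hi Hj Hji) as [-> | ->].
  - rewrite (proj1 (alpha_next_gap i Hi)); unfold mutual_cos; field.
  - rewrite (proj1 (alpha_prev_gap i Hi)); unfold mutual_cos; field.
Qed.

Definition attraction (m : nat -> R) (q : nat -> V3) (i j : nat) : V3 :=
  vscale (m j / (sqrt (1 - (vdot (q i) (q j)) ^ 2)) ^ 3)
         (vsub (q j) (vscale (vdot (q i) (q j)) (q i))).

Lemma force_three (m : nat -> R) (q : nat -> V3) (i : nat) : (i < 3)%nat ->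
  force 3 m q i = vadd (attraction m q i (next i)) (attraction m q i (prev i)).
Proof.
  intros Hi.
  change (force 3 m q i) with
    (vsum 3 (fun j => if Nat.eqb j i then vzero else attraction m q i j)).
  destruct i as [|[|[|i]]]; try lia; cbn [vsum Nat.eqb next prev];
  apply V3_eq; cbn; ring.
Qed.

Lemma force_rot_triangle (m : nat -> R) (z w : R) (i : nat) (t : R) :
  -1 < z < 1 -> (i < 3)%nat ->
  let q := fun j => rot_triangle z w j t in
  force 3 m q i =
  vadd (vscale (m (next i) / pair_denominator z) (vsub (q (next i)) (vscale (mutual_cos z) (q i))))
       (vscale (m (prev i) / pair_denominator z) (vsub (q (prev i)) (vscale (mutual_cos z) (q i)))).
Proof.
  intros Hz Hi q; destruct (neighbours_spec i Hi) as [Hn [Hp [Hni Hpi]]].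
  rewrite force_three by exact Hi; unfold attraction, q.
  rewrite !rot_triangle_dot by assumption; reflexivity.
Qed.

Lemma tangential_force (m : nat -> R) (z w : R) (i : nat) (t : R) :
  -1 < z < 1 -> (i < 3)%nat ->
  vdot (force 3 m (fun j => rot_triangle z w j t) i)
       (circle (sqrt (1 - z ^ 2) * w) w (alpha i + PI / 2) 0 t) =
  sqrt (1 - z ^ 2) * (sqrt (1 - z ^ 2) * w) * (sqrt 3 / 2) / pair_denominator z
  * (m (next i) - m (prev i)).
Proof.
  intros Hz Hi.
  pose proof (pair_denominator_pos z Hz) as HD.
  rewrite force_rot_triangle by assumption.
  rewrite vdot_addl, !vdot_scalel, !vdot_subl, !vdot_scalel, !rot_triangle_circle, !circle_dot_tangent.
  rewrite Rminus_diag, sin_0, (proj2 (alpha_next_gap i Hi)), (proj2 (alpha_prev_gap i Hi)).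
  field; lra.
Qed.

(* For equal masses mu the force on body i is (3 mu / D) (z e_3 - z^2 q_i),
   because the positions of the two neighbours add up to
   2 z e_3 minus the horizontal part of q_i. *)
Lemma force_equal_masses (m : nat -> R) (mu z w : R) (i : nat) (t : R) :
  -1 < z < 1 -> (i < 3)%nat -> (forall j, (j < 3)%nat -> m j = mu) ->
  force 3 m (fun j => rot_triangle z w j t) i =
  vscale (3 * mu / pair_denominator z) (vsub (mkV3 0 0 z) (vscale (z ^ 2) (rot_triangle z w i t))).
Proof.
  intros Hz Hi Hm.
  pose proof (pair_denominator_pos z Hz) as HD.
  destruct (neighbours_spec i Hi) as [Hn [Hp _]].
  rewrite force_rot_triangle, !Hm by assumption.
  destruct (alpha_next_gap i Hi) as [Hcn Hsn]; destruct (alpha_prev_gap i Hi) as [Hcp Hsp].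
  rewrite !rot_triangle_circle; unfold circle.
  replace (w * t + alpha (next i)) with (w * t + alpha i + (alpha (next i) - alpha i)) by ring.
  replace (w * t + alpha (prev i)) with (w * t + alpha i + (alpha (prev i) - alpha i)) by ring.
  remember (w * t + alpha i) as th.
  rewrite !cos_plus, !sin_plus, Hcn, Hsn, Hcp, Hsp.
  set (D := pair_denominator z) in *; clearbody D.
  apply V3_eq; cbn; unfold mutual_cos; field; lra.
Qed.

(* Necessity: along a solution the tangential force vanishes, since the
   acceleration and the position are both orthogonal to the velocity. *)
Lemma solution_balances_neighbours (m : nat -> R) (z w : R) (i : nat) :
  -1 < z < 1 -> w <> 0 -> is_solution 3 m (rot_triangle z w) -> (i < 3)%nat ->
  m (next i) = m (prev i).
Proof.
  intros Hz Hw [v [a Hsol]] Hi.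
  pose proof (radius_pos z Hz) as Hr; pose proof (pair_denominator_pos z Hz) as HD.
  assert (Hs3 : 0 < sqrt 3) by (apply sqrt_lt_R0; lra).
  destruct (Hsol i 0 Hi) as [_ [Hacc [_ [_ [_ Hmotion]]]]].
  destruct (circle_motion_determined _ _ _ _ (v i) 0 (a i 0)
              (fun s => proj1 (Hsol i s Hi)) Hacc) as [Hv Ha].
  assert (Htangent : vdot (a i 0) (v i 0) = 0) by (rewrite Ha, Hv; apply circle_perp).
  rewrite Hmotion, vdot_subl, vdot_scalel, Hv, tangential_force, rot_triangle_circle,
    circle_perp, Rmult_0_r, Rminus_0_r in Htangent by assumption.
  apply Rmult_integral in Htangent as [Hzero | Hbalance]; [| lra].
  exfalso; revert Hzero; unfold Rdiv.
  repeat apply Rmult_integral_contrapositive_currified; try lra.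
  apply Rinv_neq_0_compat; lra.
Qed.

(* Sufficiency: for equal masses the triangle rotating with w^2 = 3 mu / D
   is a solution. *)
Lemma equal_masses_solution (m : nat -> R) (z : R) :
  -1 < z < 1 -> 0 < m 0%nat -> (forall j, (j < 3)%nat -> m j = m 0%nat) ->
  exists w : R, w <> 0 /\ is_solution 3 m (rot_triangle z w).
Proof.
  intros Hz Hm0 Hm.
  pose proof (radius_sq z Hz) as Hrr; pose proof (pair_denominator_pos z Hz) as HD.
  set (r := sqrt (1 - z ^ 2)) in *.
  set (K := 3 * m 0%nat / pair_denominator z).
  assert (HK : 0 < K) by (apply Rdiv_lt_0_compat; lra).
  set (w := sqrt K).
  assert (Hww : w * w = K) by (apply sqrt_sqrt; lra).
  assert (Hw : 0 < w) by (apply sqrt_lt_R0; lra).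
  exists w; split; [lra|].
  exists (fun i => circle (r * w) w (alpha i + PI / 2) 0).
  exists (fun i => circle (- (r * w * w)) w (alpha i) 0).
  intros i t Hi; cbv beta; refine (conj _ (conj _ (conj _ (conj _ (conj _ _))))).
  - apply circle_deriv.
  - rewrite <- circle_half_turn; apply circle_deriv.
  - apply rot_triangle_unit, Hz.
  - apply circle_perp.
  - intros j Hj Hji; rewrite rot_triangle_dot by assumption.
    pose proof (mutual_cos_sq_lt_1 z Hz); lra.
  - rewrite force_equal_masses with (mu := m 0%nat) by assumption.
    fold K; rewrite <- Hww, circle_dot, Rminus_diag, cos_0, rot_triangle_circle.
    fold r; replace (z ^ 2) with (1 - r * r) by lra.
    apply V3_eq; cbn; ring.
Qed.

Theorem mainTheorem9 (m : nat -> R) (z : R)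
  (hm0 : 0 < m 0%nat) (hm1 : 0 < m 1%nat) (hm2 : 0 < m 2%nat)
  (hz : -1 < z < 1) :
  (exists w : R, w <> 0 /\ is_solution 3 m (rot_triangle z w)) <->
  (m 0%nat = m 1%nat /\ m 1%nat = m 2%nat).
Proof.
  split.
  - intros [w [Hw Hsol]].
    pose proof (solution_balances_neighbours m z w 0 hz Hw Hsol ltac:(lia)) as H12.
    pose proof (solution_balances_neighbours m z w 1 hz Hw Hsol ltac:(lia)) as H20.
    cbn in H12, H20; split; congruence.
  - intros [H01 H12]; apply equal_masses_solution; [exact hz | exact hm0 |].
    intros j Hj; destruct j as [|[|[|j]]]; congruence || lia.
Qed.
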